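(* In the setting of the context, suppose that $R=S$ and that $A$ is not abelian. If $v\in C_V(A)$ satisfies $[v\mu,a]-vh_a=0$ for all $a\in A$, then $v=0$.
   Context: Conventions: $G$ acts on $V$ on the right, $[v,g]=-v+vg$; $[X,Y]$ is the subgroup generated by commutators, $[X,Y,Z]=[[X,Y],Z]$; $A^\#=A\setminus\{1\}$. Setting: $G=\langle A,B\rangle$ is an abstract rank one group with unipotent subgroups $A,B$ (distinct nilpotent; for each $a\in A^\#$ some $b(a)\in B^\#$ with $B^a=A^{b(a)}$, and vice versa). $\mu_a=b(a^{-1})ab(a)^{-1}$, $H=\langle\mu_a\mu_c:a,c\in A^\#\rangle$. $V$ is a $\mathbb{Z}G$-module with $[V,A,A,A]=0$, $[V,G,G,G]\neq0$, $[V,G]=V$, $C_V(G)=0$. $A_0=C_A([V,A])\cap C_A(V/C_V(A))\neq1$. Fix $e\in A_0^\#$ (with $e=a^2$ for some $a\in A$ if $V$ has exponent 2 and $A$ is non-abelian), $\mu=\mu_{e^{-1}}$, $h_a=\mu\mu_a$ for $a\in A^\#$, $h_1=0$; $\rho(h)$ = restriction of $h\in H$ to $C_V(A)$, $\rho(h_1)=0$. $R$, $S$ are the subrings of $\mathrm{End}(C_V(A))$ generated by $J=\{\rho(h_a):a\in A_0\}$, resp. by $\rho(H)$. *)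

From HB Require Import structures.
From mathcomp Require Import all_boot all_algebra.
Set Implicit Arguments. Unset Strict Implicit. Unset Printing Implicit Defensive.
Import GRing.Theory.

Local Open Scope group_scope.

Inductive ggen (gT : groupType) (S : gT -> Prop) : gT -> Prop :=
| ggen_base x : S x -> ggen S x
| ggen_one : ggen S 1
| ggen_mul x y : ggen S x -> ggen S y -> ggen S (x * y)
| ggen_inv x : ggen S x -> ggen S x^-1.

Definition is_subgroup (gT : groupType) (X : gT -> Prop) :=
  [/\ X 1, (forall x y, X x -> X y -> X (x * y)) & (forall x, X x -> X x^-1)].

Definition gcomm (gT : groupType) (X Y : gT -> Prop) : gT -> Prop :=
  ggen (fun z => exists x y, [/\ X x, Y y & z = [~ x, y]]).

Fixpoint lcs (gT : groupType) (X : gT -> Prop) (n : nat) : gT -> Prop :=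
  match n with 0 => X | n'.+1 => gcomm (lcs X n') X end.

Definition ab_nilpotent (gT : groupType) (X : gT -> Prop) :=
  exists n, forall x, lcs X n x -> x = 1.

Definition ab_abelian (gT : groupType) (X : gT -> Prop) :=
  forall x y, X x -> X y -> x * y = y * x.

Definition conj_set (gT : groupType) (X : gT -> Prop) (g : gT) : gT -> Prop :=
  fun z => exists2 x, X x & z = x ^ g.

Definition set_eq (T : Type) (X Y : T -> Prop) := forall x, X x <-> Y x.

(* gT = <A,B> is an abstract rank one group with unipotent subgroups A, B;
   b is the chosen map a |-> b(a) on A^#. *)
Definition abstract_rank_one (gT : groupType) (A B : gT -> Prop)
    (b : gT -> gT) :=
  [/\ is_subgroup A /\ is_subgroup B,
      ab_nilpotent A /\ ab_nilpotent B,
      ~ set_eq A B /\ (forall x, ggen (fun z => A z \/ B z) x),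
      (forall a, A a -> a <> 1 ->
         [/\ B (b a), b a <> 1 & set_eq (conj_set B a) (conj_set A (b a))]) &
      (forall y, B y -> y <> 1 ->
         exists a, [/\ A a, a <> 1 & set_eq (conj_set A y) (conj_set B a)])].

Definition mu_of (gT : groupType) (b : gT -> gT) (a : gT) : gT :=
  b a^-1 * a * (b a)^-1.

Definition Hgrp (gT : groupType) (A : gT -> Prop) (b : gT -> gT) : gT -> Prop :=
  ggen (fun h => exists a c,
          [/\ A a, a <> 1, A c, c <> 1 & h = mu_of b a * mu_of b c]).

Local Close Scope group_scope.
Local Open Scope ring_scope.

Definition right_module (gT : groupType) (V : zmodType) (act : V -> gT -> V) :=
  [/\ (forall v, act v 1%g = v),
      (forall v g h, act v (g * h)%g = act (act v g) h) &
      (forall u v g, act (u + v) g = act u g + act v g)].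

Definition vcomm (gT : groupType) (V : zmodType) (act : V -> gT -> V) v g : V :=
  - v + act v g.

Inductive zgen (V : zmodType) (S : V -> Prop) : V -> Prop :=
| zgen_base v : S v -> zgen S v
| zgen_zero : zgen S 0
| zgen_add u v : zgen S u -> zgen S v -> zgen S (u + v)
| zgen_opp v : zgen S v -> zgen S (- v).

Definition mcomm (gT : groupType) (V : zmodType) (act : V -> gT -> V)
    (X : V -> Prop) (Y : gT -> Prop) : V -> Prop :=
  zgen (fun w => exists x y, [/\ X x, Y y & w = vcomm act x y]).

Definition fixV (gT : groupType) (V : zmodType) (act : V -> gT -> V)
    (Y : gT -> Prop) : V -> Prop :=
  fun v => forall y, Y y -> act v y = v.

(* A_0 = C_A([V,A]) \cap C_A(V/C_V(A)) *)
Definition A0 (gT : groupType) (V : zmodType) (act : V -> gT -> V)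
    (A : gT -> Prop) : gT -> Prop :=
  fun a => [/\ A a,
     (forall x, mcomm act (fun _ => True) A x -> act x a = x) &
     (forall v, fixV act A (vcomm act v a))].

(* v |-> v h_a, with h_a = mu mu_a (a in A^#), h_1 = 0, mu = mu_{e^-1} *)
Definition hmap (gT : groupType) (V : zmodType) (act : V -> gT -> V)
    (b : gT -> gT) (e a : gT) : V -> V :=
  fun v => if a == 1%g then 0 else act v (mu_of b e^-1 * mu_of b a)%g.

(* Subring (with 1) of End(C) generated by a set J of maps; an element of
   End(C) is represented by any map V -> V agreeing with it on C. *)
Inductive ringgen (V : zmodType) (C : V -> Prop) (J : (V -> V) -> Prop)
  : (V -> V) -> Prop :=
| rg_gen f g : J g -> (forall v, C v -> f v = g v) -> ringgen C J f
| rg_one f : (forall v, C v -> f v = v) -> ringgen C J f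
| rg_zero f : (forall v, C v -> f v = 0) -> ringgen C J f
| rg_add f g h : ringgen C J f -> ringgen C J g ->
    (forall v, C v -> h v = f v + g v) -> ringgen C J h
| rg_opp f h : ringgen C J f ->
    (forall v, C v -> h v = - f v) -> ringgen C J h
| rg_mul f g h : ringgen C J f -> ringgen C J g ->
    (forall v, C v -> h v = g (f v)) -> ringgen C J h.

Definition ringR (gT : groupType) (V : zmodType) (act : V -> gT -> V)
    (A : gT -> Prop) (b : gT -> gT) (e : gT) : (V -> V) -> Prop :=
  ringgen (fixV act A) (fun f => exists2 a, A0 act A a & f = hmap act b e a).

Definition ringS (gT : groupType) (V : zmodType) (act : V -> gT -> V)
    (A : gT -> Prop) (b : gT -> gT) : (V -> V) -> Prop :=
  ringgen (fixV act A) (fun f => exists2 h, Hgrp A b h & f = (fun v => act v h)).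

From HB Require Import structures.
From mathcomp Require Import all_boot all_algebra.
From Stdlib Require Import Classical.

(* Write [u := v mu] and [d a := v h_a].  Since [mu_a] interchanges [A] and
   [B] by conjugation, every [h_a] normalises [A], so [d a] lies in
   [C_V(A)] together with [v].  The hypothesis then reads [u a = u + d a],
   and this cocycle identity forces [d] to be a homomorphism from [A] to the
   additive group of [V].  Such a homomorphism vanishes on commutators;
   as [A] is not abelian there is a commutator [z <> 1], whence
   [v h_z = 0] and [v = 0] because [h_z] acts invertibly. *)

Set Implicit Arguments.
Unset Strict Implicit.
Unset Printing Implicit Defensive.

Import GRing.Theory.
Local Open Scope ring_scope.

Section Subgroup.
Variables (gT : groupType) (X : gT -> Prop).
Hypothesis sgX : is_subgroup X.

Lemma subgroup1 : X 1%g.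
Proof. by case: sgX. Qed.

Lemma subgroupM x y : X x -> X y -> X (x * y)%g.
Proof. by case: sgX => _ + _; apply. Qed.

Lemma subgroupV x : X x -> X x^-1%g.
Proof. by case: sgX => _ _; apply. Qed.

Lemma subgroupJ x y : X x -> X y -> X (x ^ y)%g.
Proof. by move=> Xx Xy; rewrite conjgE; do 2?apply: subgroupM => //; apply: subgroupV. Qed.

Lemma not_abelian_commg :
  ~ ab_abelian X -> exists x y, [/\ X x, X y & [~ x, y] <> 1]%g.
Proof.
move=> nabX; apply: NNPP => noncomm; apply: nabX => x y Xx Xy.
apply: NNPP => nxy; apply: noncomm; exists x, y.
by split=> // /eqP/commgP.
Qed.

Variables (V : zmodType) (d : gT -> V).
Hypothesis dM : forall x y, X x -> X y -> d (x * y)%g = d x + d y.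

Lemma additive1 : d 1%g = 0.
Proof.
by apply: (addrI (d 1%g)); rewrite addr0 -dM ?mulg1 //; apply: subgroup1.
Qed.

Lemma additiveV x : X x -> d x^-1%g = - d x.
Proof.
move=> Xx; apply/eqP; rewrite -subr_eq0 opprK -dM ?mulVg ?additive1 //.
exact: subgroupV.
Qed.

Lemma additive_commg x y : X x -> X y -> d [~ x, y]%g = 0.
Proof.
move=> Xx Xy; have [Xx' Xy'] := (subgroupV Xx, subgroupV Xy).
rewrite commgEl conjgE !mulgA !dM ?additiveV //;
  do ?[apply: subgroupM | exact: subgroupV] => //.
by rewrite (addrAC (- d x)) addNr add0r addNr.
Qed.
End Subgroup.

Section RankOne.
Variables (gT : groupType) (A B : gT -> Prop) (b : gT -> gT).
Hypotheses (sgA : is_subgroup A) (sgB : is_subgroup B).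
Hypothesis conj_b : forall a, A a -> a <> 1%g ->
  [/\ B (b a), b a <> 1%g & set_eq (conj_set B a) (conj_set A (b a))].

Lemma invg_neq1 (a : gT) : a <> 1%g -> a^-1%g <> 1%g.
Proof. by move=> a1 /eqP; rewrite invg_eq1 => /eqP. Qed.

Lemma mu_ofV a : ((mu_of b a)^-1 = b a * a^-1 * (b a^-1)^-1)%g.
Proof. by rewrite /mu_of !invgM invgK mulgA. Qed.

Lemma conj_mu_ofV_BA a y : A a -> a <> 1%g -> B y -> A (y ^ (mu_of b a)^-1)%g.
Proof.
move=> Aa a1 By; have [Bba _ _] := conj_b Aa a1.
have [_ _ eqBA] := conj_b (subgroupV sgA Aa) (invg_neq1 a1).
rewrite mu_ofV !conjgM.
have /eqBA [x Ax ->] : conj_set B a^-1 ((y ^ b a) ^ a^-1)%g.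
  by exists (y ^ b a)%g => //; apply: subgroupJ.
by rewrite conjgK.
Qed.

Lemma conj_mu_ofV_AB a y : A a -> a <> 1%g -> A y -> B (y ^ (mu_of b a)^-1)%g.
Proof.
move=> Aa a1 Ay; have [_ _ eqBA] := conj_b Aa a1.
have [Bba' _ _] := conj_b (subgroupV sgA Aa) (invg_neq1 a1).
rewrite mu_ofV !conjgM.
have /eqBA [x Bx ->] : conj_set A (b a) (y ^ b a)%g by exists y.
by rewrite conjgK; apply: subgroupJ => //; apply: subgroupV.
Qed.

(* [h_a = mu_{e^-1} mu_a] is the product of two swaps of [A] and [B]. *)
Lemma hconjV_A e a y : A e -> e <> 1%g -> A a -> a <> 1%g -> A y ->
  A (y ^ (mu_of b e^-1 * mu_of b a)^-1)%g.
Proof.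
move=> Ae e1 Aa a1 Ay; rewrite invgM conjgM.
apply: conj_mu_ofV_BA; [exact: subgroupV | exact: invg_neq1 |].
exact: conj_mu_ofV_AB.
Qed.
End RankOne.

Section Module.
Variables (gT : groupType) (V : zmodType) (act : V -> gT -> V).
Hypothesis modV : right_module act.

Lemma act0g g : act 0 g = 0.
Proof.
have [_ _ actD] := modV.
by apply: (addrI (act 0 g)); rewrite -actD !addr0.
Qed.

Lemma act_eq0 v g : act v g = 0 -> v = 0.
Proof.
have [act1 actM _] := modV.
by move=> vg0; rewrite -[v]act1 -(mulgV g) actM vg0 act0g.
Qed.

Lemma fixV_act (X : gT -> Prop) v g :
  (forall y, X y -> X (y ^ g^-1)%g) -> fixV act X v -> fixV act X (act v g).
Proof.
have [_ actM _] := modV.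
by move=> Xg fixv y Xy; rewrite -actM conjgCV actM fixv //; apply: Xg.
Qed.

Lemma cocycle_additive (X : gT -> Prop) u (d : gT -> V) :
  is_subgroup X -> (forall x, X x -> fixV act X (d x)) ->
  (forall x, X x -> act u x = u + d x) ->
  forall x y, X x -> X y -> d (x * y)%g = d x + d y.
Proof.
have [_ actM actD] := modV.
move=> sgX fixd ud x y Xx Xy; apply: (addrI u).
rewrite -ud; last exact: subgroupM.
by rewrite actM ud // actD ud // (fixd x) // addrAC addrA.
Qed.
End Module.

Theorem proposition5p4 (gT : groupType) (A B : gT -> Prop) (b : gT -> gT)
    (V : zmodType) (act : V -> gT -> V) (e : gT) :
  abstract_rank_one A B b ->
  right_module act ->
  (* [V,A,A,A] = 0 *)
  (forall w, mcomm act (mcomm act (mcomm act (fun _ => True) A) A) A w -> w = 0) ->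
  (* [V,G,G,G] <> 0 *)
  (exists w, mcomm act (mcomm act (mcomm act (fun _ => True) (fun _ => True))
                 (fun _ => True)) (fun _ => True) w /\ w <> 0) ->
  (* [V,G] = V *)
  (forall v, mcomm act (fun _ => True) (fun _ => True) v) ->
  (* C_V(G) = 0 *)
  (forall v, fixV act (fun _ => True) v -> v = 0) ->
  (* A_0 <> 1 *)
  (exists a, A0 act A a /\ a <> 1%g) ->
  (* e in A_0^# *)
  A0 act A e -> e <> 1%g ->
  (* if V has exponent 2 and A is non-abelian then e is a square in A *)
  ((forall v : V, v + v = 0) -> ~ ab_abelian A ->
     exists2 a, A a & e = (a * a)%g) ->
  (* R = S *)
  (forall f, ringR act A b e f <-> ringS act A b f) ->
  (* A is not abelian *)
  ~ ab_abelian A ->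
  forall v, fixV act A v ->
    (forall a, A a ->
       vcomm act (act v (mu_of b e^-1)%g) a - hmap act b e a v = 0) ->
    v = 0.
Proof.
move=> [[sgA sgB] _ _ conj_b _] modV _ _ _ _ _ [Ae _ _] e1 _ _ nabA v fixv hyp.
set u := act v (mu_of b e^-1)%g; set d := fun a => hmap act b e a v.
have fixd x : A x -> fixV act A (d x).
  move=> Ax; rewrite /d /hmap; case: eqP => [_ y _ | x1]; first exact: act0g.
  by apply: (fixV_act modV) => // y; apply: (hconjV_A sgA sgB conj_b).
have ud x : A x -> act u x = u + d x.
  by move=> Ax; apply/eqP; rewrite -subr_eq0 -(hyp x Ax) opprD addrA (addrC (act u x)).
have dM := cocycle_additive modV sgA fixd ud.
have [x [y [Ax Ay xy1]]] := not_abelian_commg nabA.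
have := additive_commg sgA dM Ax Ay.
rewrite /d /hmap; case: eqP => // _; exact: act_eq0.
Qed.
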